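(* Any two demicaps in $AG(4,3)$ are affinely equivalent: if $D_1,D_2$ are demicaps, there is an affine transformation $v\mapsto Av+b$ with $A\in GL(4,3)$, $b\in\mathbb{F}_3^4$, mapping $D_1$ onto $D_2$.
   Context: $AG(4,3)$ is the affine space $\mathbb{F}_3^4$; a line is a set of three distinct points $\{x,y,z\}$ with $x+y+z=0$. A cap is a set of points containing no line. A hyperplane is a $3$-dimensional affine subspace of $\mathbb{F}_3^4$; a set of points is co-hyperplanar if it lies in a common hyperplane. For a point $a$, an $a$-line is a pair of points $\{b,c\}$ such that $\{a,b,c\}$ is a line. A demicap with anchor point $a$ is a cap consisting of the $10$ points of five $a$-lines such that no four of these five $a$-lines are co-hyperplanar. *)

(* AG(4,3) = F_3^4, points are row vectors 'rV['F_3]_4. *)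
From HB Require Import structures.
From mathcomp Require Import all_boot all_order all_algebra all_fingroup.
Set Implicit Arguments. Unset Strict Implicit. Unset Printing Implicit Defensive.
Import GRing.Theory.
Local Open Scope ring_scope.

Definition point := 'rV['F_3]_4.

Definition is_line (x y z : point) : bool :=
  [&& x != y, y != z, x != z & x + y + z == 0].

Definition is_cap (D : {set point}) : Prop :=
  forall x y z, x \in D -> y \in D -> z \in D -> ~~ is_line x y z.

Definition is_hyperplane (H : {set point}) : Prop :=
  exists (p : point) (V : 'M['F_3]_4),
    \rank V = 3%N /\ H = [set x : point | (x - p <= V)%MS].

Definition cohyperplanar (S : {set point}) : Prop :=
  exists H, is_hyperplane H /\ S \subset H.

Definition demicap_anchor (a : point) (D : {set point}) : Prop :=
  is_cap D /\
  exists b c : 'I_5 -> point,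
    [/\ forall i, is_line a (b i) (c i),
        D = \bigcup_(i < 5) [set b i; c i],
        #|D| = 10%N &
        forall I : {set 'I_5}, #|I| = 4%N ->
          ~ cohyperplanar (\bigcup_(i in I) [set b i; c i])].

Definition demicap (D : {set point}) : Prop := exists a, demicap_anchor a D.

From HB Require Import structures.
From mathcomp Require Import all_boot all_order all_algebra all_fingroup.
Set Implicit Arguments.
Unset Strict Implicit.
Local Open Scope ring_scope.
Import GRing.Theory.

(* We show that every demicap is the image of one model demicap under an
   affine bijection x |-> x A + t; the theorem then follows by composing one
   such map with the inverse of the other.

   Let D be a demicap with anchor a and a-lines {b_i, c_i}, i < 5.  Writing
   u_i = b_i - a, the line condition gives c_i = a - u_i, so
   D = a + {u_i, -u_i}.  If four of the u_i were linearly dependent they would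
   lie in a linear hyperplane V, and a + V would contain four of the a-lines;
   hence any four of the five directions form a basis, i.e. they form a
   projective frame of F_3^4.  For a frame u_0, ..., u_4 the last vector is
   u_4 = sum_r l_r u_r with every l_r nonzero, so the matrix with rows l_r u_r
   is invertible and sends the standard basis vectors e_r to l_r u_r and the
   all-ones vector to u_4.  As l_r = +-1 over F_3, it maps the model demicap
   {+-e_0, ..., +-e_3, +-(1,1,1,1)} (translated by a) onto D. *)

Lemma F3_nonzero {s : 'F_3} : s != 0 -> s = 1 \/ s = -1.
Proof. by case: s => [[|[|[|]]]] //= ? _; [left | right]; apply/val_inj. Qed.

(* In a vector space over F_3, the third point of the line through x and y is
   x - (y - x): indeed 3 x = 0, so -x - y = 2x - y. *)
Lemma third_point_on_line (V : lmodType 'F_3) (x y z : V) :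
  x + y + z = 0 -> z = x - (y - x).
Proof.
move/(canRL (addKr (x + y))); rewrite addr0 => ->.
have three_x : x *+ 3 = 0.
  by rewrite -scaler_nat (_ : 3%:R = 0) ?scale0r //; apply/val_inj.
rewrite !mulrS mulr0n addr0 in three_x.
by rewrite opprB opprD addrA -(addr0_eq three_x).
Qed.

(* A matrix with n+1 columns whose rank is at most n has its row space inside
   a hyperplane through the origin: the kernel of a nonzero cokernel column. *)
Lemma rank_deficient_sub_hyperplane (F : fieldType) (m n : nat)
    (M : 'M[F]_(m, n.+1)) :
  (\rank M <= n)%N -> exists V : 'M[F]_n.+1, \rank V = n /\ (M <= V)%MS.
Proof.
move=> rkM; set C := cokermx M.
have nzC : C != 0.
  by rewrite -mxrank_eq0 mxrank_coker subn_eq0 -ltnNge ltnS.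
have [j nz_j] : exists j, col j C != 0.
  apply/existsP; apply: contraR nzC => /existsPn col0.
  apply/eqP/matrixP => i j; have /negPn/eqP/colP/(_ i) := col0 j.
  by rewrite !mxE.
exists (kermx (col j C)); split.
  have rk1 : \rank (col j C) = 1%N.
    by apply/eqP; rewrite eqn_leq rank_leq_col lt0n mxrank_eq0.
  by rewrite mxrank_ker rk1 subn1.
by rewrite sub_kermx colE mulmxA mulmx_coker mul0mx.
Qed.

Section ProjectiveFrame.

(* The n+1 rows of U form a frame of F^n: any n of them form a basis. *)
Variables (F : fieldType) (n : nat) (U : 'M[F]_(n.+1, n)).
Hypothesis frameU : forall k, rowsub (lift k) U \in unitmx.

(* A nontrivial linear relation among the rows of a frame involves every row:
   dropping a row with zero coefficient would give a relation among n
   independent vectors. *)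
Lemma frame_relation_full_support (mu : 'rV[F]_n.+1) :
  mu *m U = 0 -> mu != 0 -> forall k, mu 0 k != 0.
Proof.
move=> muU0 nz_mu k; apply: contra nz_mu => /eqP mu_k0.
set nu : 'rV_n := \row_r mu 0 (lift k r).
have nuU0 : nu *m rowsub (lift k) U = 0.
  rewrite -muU0 !mulmx_sum_row (bigD1_ord k) //= mu_k0 scale0r add0r.
  by apply: eq_bigr => r _; rewrite mxE row_rowsub.
have nu0 : nu = 0.
  have free_k : row_free (rowsub (lift k) U) by rewrite row_free_unit.
  by apply: (row_free_inj free_k); rewrite mul0mx.
apply/eqP/rowP => i; rewrite mxE; case: (unliftP k i) => [r ->|->] //.
by have /rowP/(_ r) := nu0; rewrite !mxE.
Qed.

Definition frame_coords : 'rV[F]_n :=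
  row ord_max U *m invmx (rowsub (lift ord_max) U).

Lemma frame_coordsP : frame_coords *m rowsub (lift ord_max) U = row ord_max U.
Proof. by rewrite mulmxKV. Qed.

(* All these coordinates are nonzero, by the full-support property applied to
   the relation  sum_r frame_coords_r u_r - u_n = 0. *)
Lemma frame_coords_neq0 (j : 'I_n) : frame_coords 0 j != 0.
Proof.
set mu : 'rV_n.+1 :=
  \row_i (if unlift ord_max i is Some r then frame_coords 0 r else -1).
have muU0 : mu *m U = 0.
  rewrite mulmx_sum_row (bigD1_ord ord_max) //= mxE unlift_none scaleN1r.
  rewrite -[X in - X + _]frame_coordsP mulmx_sum_row addrC; apply/eqP.
  rewrite subr_eq0; apply/eqP/eq_bigr => r _.
  by rewrite mxE liftK row_rowsub.
have nz_mu : mu != 0.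
  by apply/eqP => /rowP/(_ ord_max)/eqP; rewrite !mxE unlift_none oppr_eq0 oner_eq0.
by have := @frame_relation_full_support mu muU0 nz_mu (lift ord_max j);
  rewrite mxE liftK.
Qed.

Definition frame_matrix : 'M[F]_n := diag_mx frame_coords *m rowsub (lift ord_max) U.

Lemma frame_matrix_unit : frame_matrix \in unitmx.
Proof.
rewrite unitmx_mul frameU andbT unitmxE det_diag unitfE.
by apply/prodf_neq0 => j _; apply: frame_coords_neq0.
Qed.

Lemma frame_matrix_delta (r : 'I_n) :
  delta_mx 0 r *m frame_matrix = frame_coords 0 r *: row (lift ord_max r) U.
Proof.
by rewrite mulmxA -rowE row_diag_mx -scalemxAl -rowE row_rowsub.
Qed.

Lemma frame_matrix_ones : const_mx 1 *m frame_matrix = row ord_max U.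
Proof.
rewrite mulmxA -frame_coordsP; congr (_ *m _).
by apply/rowP => j; rewrite mul_mx_diag !mxE mul1r.
Qed.

End ProjectiveFrame.

Definition std_direction (i : 'I_5) : point :=
  if unlift ord_max i is Some r then delta_mx 0 r else const_mx 1.

Definition std_demicap : {set point} :=
  \bigcup_(i < 5) [set std_direction i; - std_direction i].

(* An affine map x |-> x A + a sending x to a nonzero multiple of p maps the
   pair {x, -x} onto the a-line {a + p, a - p}: over F_3 that multiple is 1 or
   -1, and either sign gives the same pair. *)
Lemma affine_image_opposite_pair (A : 'M['F_3]_4) (a x p : point) (s : 'F_3) :
  s != 0 -> x *m A = s *: p ->
  [set y *m A + a | y in [set x; - x]] = [set p + a; a - p].
Proof.
move=> nz_s xA; rewrite imsetU1 imset_set1 mulNmx xA [- _ + a]addrC.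
case: (F3_nonzero nz_s) => ->; first by rewrite scale1r.
by rewrite scaleN1r opprK [- p + a]addrC [a + p]addrC setUC.
Qed.

(* A demicap with anchor a is  a + {u_i, -u_i : i < 5}  where any four of the
   directions u_i are linearly independent: four dependent directions span at
   most a linear hyperplane V, and then a + V contains four of the a-lines. *)
Lemma demicap_directions (a : point) (D : {set point}) :
  demicap_anchor a D ->
  exists u : 'I_5 -> point,
    D = \bigcup_(i < 5) [set u i + a; a - u i] /\
    forall k, rowsub (lift k) (\matrix_i u i) \in unitmx.
Proof.
case=> _ [b [c [lines -> _ not_cohyp]]].
pose u i := b i - a.
have c_def i : c i = a - u i.
  by have /and4P[_ _ _ /eqP/third_point_on_line] := lines i.
exists u; split.
  by apply: eq_bigr => i _; rewrite c_def subrK.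
move=> k; apply/negPn/negP; rewrite -row_free_unit => dep.
have [V [rkV sub_V]] : exists V : 'M['F_3]_4, \rank V = 3%N /\
    (rowsub (lift k) (\matrix_i u i) <= V)%MS.
  apply: rank_deficient_sub_hyperplane.
  by rewrite -ltnS ltn_neqAle dep rank_leq_row.
apply: (not_cohyp [set~ k]); first by rewrite cardsC1 card_ord.
exists [set x | (x - a <= V)%MS]; split; first by exists a, V.
apply/subsetP => x /bigcupP[i]; rewrite in_setC1 => i_neq_k.
have u_in_V : (u i <= V)%MS.
  case: (unliftP k i) => [r def_i|def_i]; last by rewrite def_i eqxx in i_neq_k.
  apply: submx_trans sub_V; rewrite def_i -[u _](rowK u) -row_rowsub.
  exact: row_sub.
rewrite !inE => /orP[]/eqP->; first exact: u_in_V.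
by rewrite c_def addrAC subrr add0r eqmx_opp.
Qed.

(* Conversely, such a configuration is an affine image of the model demicap:
   the frame matrix of the directions sends each standard direction to a
   nonzero multiple of the corresponding u_i. *)
Lemma frame_image_std_demicap (a : point) (u : 'I_5 -> point) :
  (forall k, rowsub (lift k) (\matrix_i u i) \in unitmx) ->
  exists (A : 'M['F_3]_4) (t : point), A \in unitmx /\
    [set x *m A + t | x in std_demicap] = \bigcup_(i < 5) [set u i + a; a - u i].
Proof.
move=> frameU; exists (frame_matrix (\matrix_i u i)), a.
split; first exact: frame_matrix_unit.
rewrite (big_morph _ (imsetU _) (imset0 _)); apply: eq_bigr => i _.
case: (unliftP ord_max i) => [r ->|->].
  apply: (affine_image_opposite_pair _ (frame_coords_neq0 frameU r)).
  by rewrite /std_direction liftK frame_matrix_delta rowK.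
apply: (@affine_image_opposite_pair _ _ _ _ 1) => //.
by rewrite /std_direction unlift_none (frame_matrix_ones frameU) rowK scale1r.
Qed.

Lemma demicap_std_image (D : {set point}) :
  demicap D -> exists (A : 'M['F_3]_4) (t : point),
    A \in unitmx /\ [set x *m A + t | x in std_demicap] = D.
Proof.
case=> a /demicap_directions[u [-> frameU]].
exact: frame_image_std_demicap.
Qed.

Theorem theorem3p6 (D1 D2 : {set point}) :
  demicap D1 -> demicap D2 ->
  exists (A : 'M['F_3]_4) (b : point),
    A \in unitmx /\ [set x *m A + b | x in D1] = D2.
Proof.
move=> /demicap_std_image[A1 [t1 [unit_A1 <-]]].
move=> /demicap_std_image[A2 [t2 [unit_A2 <-]]].
exists (invmx A1 *m A2), (t2 - t1 *m (invmx A1 *m A2)); split.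
  by rewrite unitmx_mul unitmx_inv unit_A1 unit_A2.
rewrite -imset_comp; apply: eq_imset => x /=.
by rewrite mulmxDl [t2 - _]addrC addrA addrK mulmxA mulmxK.
Qed.
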